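(* Let $\mathcal{T}$ be a tangle of order $k$ in a connectivity system $(E,\lambda)$. Let $X$ be a $\mathcal{T}$-strong $k$-separating set, and let $\mathcal{F}$ be the set of fully closed $k$-separating sets that contain $X$. Then $\bigcap \mathcal{F}$ is a fully closed $k$-separating set that contains $X$.
   Context: A connectivity system is a pair $(E,\lambda)$ with $E$ finite and $\lambda$ an integer-valued symmetric ($\lambda(X)=\lambda(E-X)$) submodular function on subsets of $E$. $X$ is $k$-separating if $\lambda(X)\le k$. A tangle of order $k$ is a collection $\mathcal T$ of subsets of $E$ with (T1) $\lambda(A)<k$ for $A\in\mathcal T$; (T2) if $\lambda(A)\le k-1$ then $A\in\mathcal T$ or $E-A\in\mathcal T$; (T3) $A\cup B\cup C\ne E$ for $A,B,C\in\mathcal T$; (T4) $E-\{e\}\notin\mathcal T$ for $e\in E$. A set is $\mathcal T$-weak if contained in a member of $\mathcal T$, and $\mathcal T$-strong otherwise. A $\mathcal T$-strong $k$-separating set $X$ is fully closed if $X\cup Y$ is not $k$-separating for every nonempty $\mathcal T$-weak $Y\subseteq E-X$. *)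

From mathcomp Require Import all_boot all_order all_algebra.
Set Implicit Arguments. Unset Strict Implicit. Unset Printing Implicit Defensive.
Import Order.TTheory GRing.Theory Num.Theory.
Local Open Scope ring_scope.

(* A connectivity system (E, lambda): E a finite type (the ground set is
   [set: E]), lambda an integer-valued symmetric submodular function. *)
Definition symmetric_fn (E : finType) (lambda : {set E} -> int) : Prop :=
  forall X : {set E}, lambda X = lambda (~: X).

Definition submodular_fn (E : finType) (lambda : {set E} -> int) : Prop :=
  forall X Y : {set E}, lambda (X :|: Y) + lambda (X :&: Y) <= lambda X + lambda Y.

Definition connectivity_system (E : finType) (lambda : {set E} -> int) : Prop :=
  symmetric_fn lambda /\ submodular_fn lambda.

Definition k_separating (E : finType) (lambda : {set E} -> int) (k : int)
  (X : {set E}) : Prop := lambda X <= k.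

Definition tangle (E : finType) (lambda : {set E} -> int) (k : int)
  (T : {set {set E}}) : Prop :=
  [/\ (forall A, A \in T -> lambda A < k),
      (forall A, lambda A <= k - 1 -> A \in T \/ ~: A \in T),
      (forall A B C, A \in T -> B \in T -> C \in T -> A :|: B :|: C != setT)
    & (forall e : E, ~: [set e] \notin T)].

Definition T_weak (E : finType) (T : {set {set E}}) (Y : {set E}) : bool :=
  [exists A in T, Y \subset A].

Definition T_strong (E : finType) (T : {set {set E}}) (Y : {set E}) : bool :=
  ~~ T_weak T Y.

Definition fully_closed (E : finType) (lambda : {set E} -> int) (k : int)
  (T : {set {set E}}) (X : {set E}) : bool :=
  [&& T_strong T X, lambda X <= k &
      [forall Y : {set E}, [&& Y != set0, T_weak T Y & Y \subset ~: X] ==>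
        ~~ (lambda (X :|: Y) <= k)]].

From mathcomp Require Import all_boot all_order all_algebra.
From mathcomp Require Import zify.
Set Implicit Arguments. Unset Strict Implicit. Unset Printing Implicit Defensive.
Import Order.TTheory GRing.Theory Num.Theory.
Local Open Scope ring_scope.

(* Call W a closure candidate if it is T-strong, k-separating and contained in
   every fully closed set containing X.  The key fact is that a fully closed Z
   absorbs every T-weak Y with W :|: Y k-separating whenever W \subset Z is
   T-strong: otherwise submodularity makes Z :&: (W :|: Y) separate with order
   below k, and the tangle axiom puts it or its complement into T, contradicting
   the strength of W or of ~: Z.  Hence a maximal candidate (which exists, X
   being one) admits no such Y, so it is fully closed; lying in every fully
   closed superset of X, it is their intersection. *)

Lemma T_weakS (E : finType) (T : {set {set E}}) (Y Y' : {set E}) :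
  Y' \subset Y -> T_weak T Y -> T_weak T Y'.
Proof.
move=> sY'Y /existsP[A /andP[AT sYA]]; apply/existsP; exists A.
by rewrite AT (subset_trans sY'Y sYA).
Qed.

Lemma T_strongS (E : finType) (T : {set {set E}}) (W W' : {set E}) :
  W \subset W' -> T_strong T W -> T_strong T W'.
Proof. by move=> sWW'; apply: contra; apply: T_weakS. Qed.

Section FullyClosed.

Variables (E : finType) (lambda : {set E} -> int) (k : int) (T : {set {set E}}).
Hypothesis lambda_sym : symmetric_fn lambda.
Hypothesis lambda_submod : submodular_fn lambda.
Hypothesis T_tangle : tangle lambda k T.

Lemma lambdaT_min (Z : {set E}) : lambda setT <= lambda Z.
Proof.
have := lambda_submod Z (~: Z).
rewrite setUCr setICr -(lambda_sym Z) (lambda_sym setT) setCT; lia.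
Qed.

Lemma fully_closed_setU_gt (Z Y : {set E}) :
  fully_closed lambda k T Z -> Y != set0 -> T_weak T Y -> Y \subset ~: Z ->
  k < lambda (Z :|: Y).
Proof.
case/and3P=> _ _ /forallP/(_ Y) closedZ Y0 weakY sYCZ.
by move: closedZ; rewrite Y0 weakY sYCZ /= -ltNge.
Qed.

Lemma fully_closed_setC_strong (Z : {set E}) :
  fully_closed lambda k T Z -> Z != setT -> T_strong T (~: Z).
Proof.
move=> closedZ ZnT; apply/negP => weakCZ.
have CZ0 : ~: Z != set0.
  by apply: contra_neq ZnT => CZ0; rewrite -(setCK Z) CZ0 setC0.
have := fully_closed_setU_gt closedZ CZ0 weakCZ (subxx _).
have := lambdaT_min Z; case/and3P: closedZ => _ Zk _.
rewrite setUCr; lia.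
Qed.

Lemma fully_closed_absorb (Z W Y : {set E}) :
  fully_closed lambda k T Z -> W \subset Z -> T_strong T W ->
  T_weak T Y -> lambda (W :|: Y) <= k -> Y \subset Z.
Proof.
move=> closedZ sWZ strongW weakY WYk; apply/negPn/negP => nsYZ.
have ZnT : Z != setT by apply: contraNneq nsYZ => ->; apply: subsetT.
have YZ0 : Y :\: Z != set0 by rewrite setD_eq0.
have sYZCZ : Y :\: Z \subset ~: Z by rewrite setDE subsetIr.
have := fully_closed_setU_gt closedZ YZ0 (T_weakS (subsetDl Y Z) weakY) sYZCZ.
have -> : Z :|: Y :\: Z = Z :|: (W :|: Y).
  by rewrite setUA (setUidPl sWZ) setDE setUIr setUCr setIT.
move=> ZWY_gt; set A := Z :&: (W :|: Y).
have Alt : lambda A <= k - 1.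
  have := lambda_submod Z (W :|: Y); rewrite -/A; case/and3P: closedZ => _ Zk _; lia.
case: T_tangle => _ /(_ A Alt)[AT | CAT] _ _.
- case/negP: strongW; apply/existsP; exists A.
  by rewrite AT subsetI sWZ subsetUl.
- case/negP: (fully_closed_setC_strong closedZ ZnT); apply/existsP.
  by exists (~: A); rewrite CAT setCS subsetIl.
Qed.

Variable X : {set E}.

Definition closure_candidate (W : {set E}) : bool :=
  [&& T_strong T W, lambda W <= k &
      [forall Z, fully_closed lambda k T Z && (X \subset Z) ==> (W \subset Z)]].

Lemma maxset_closure_candidate_fully_closed (W : {set E}) :
  maxset closure_candidate W -> fully_closed lambda k T W.
Proof.
case/maxsetP=> /and3P[strongW Wk /forallP belowW] maxW.
rewrite /fully_closed strongW Wk; apply/forallP => Y; apply/implyP.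
case/and3P=> Y0 weakY sYCW; apply/negP => WYk.
have candWY : closure_candidate (W :|: Y).
  rewrite /closure_candidate (T_strongS (subsetUl W Y) strongW) WYk.
  apply/forallP => Z; apply/implyP => /andP[closedZ sXZ].
  have sWZ : W \subset Z by apply: (implyP (belowW Z)); rewrite closedZ sXZ.
  by rewrite subUset sWZ (fully_closed_absorb closedZ sWZ strongW weakY WYk).
have /setP/(_ _) WYW := maxW _ candWY (subsetUl W Y).
case/set0Pn: Y0 => y Yy; move/subsetP/(_ y Yy): sYCW.
by rewrite inE -(WYW y) inE Yy orbT.
Qed.

End FullyClosed.

Theorem corollary3p2 (E : finType) (lambda : {set E} -> int) (k : int)
  (T : {set {set E}}) (X : {set E}) :
  connectivity_system lambda ->
  tangle lambda k T ->
  T_strong T X -> k_separating lambda k X ->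
  let F := [set Z : {set E} | fully_closed lambda k T Z && (X \subset Z)] in
  fully_closed lambda k T (\bigcap_(Z in F) Z) /\ X \subset \bigcap_(Z in F) Z.
Proof.
move=> [lambda_sym lambda_submod] T_tangle strongX Xk F.
have candX : closure_candidate lambda k T X X.
  by rewrite /closure_candidate strongX Xk; apply/forallP => Z; apply/implyP => /andP[].
have [W maxW sXW] := maxset_exists candX.
have closedW := maxset_closure_candidate_fully_closed lambda_sym lambda_submod T_tangle maxW.
suff -> : \bigcap_(Z in F) Z = W by [].
  apply/eqP; rewrite eqEsubset; apply/andP; split.
    by apply: bigcap_inf; rewrite inE closedW sXW.
  apply/bigcapsP => Z; rewrite inE => FZ.
  by case/maxsetp/and3P: maxW => _ _ /forallP/(_ Z)/implyP; apply.
Qed.
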